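(* Let $B\in\mathcal O_{\widetilde{\mathfrak a}}$ be a simple $\widetilde{\mathfrak a}$-module. (1) $\mathrm{ord}_{\widetilde{\mathfrak a}}(B)=\mathrm{ord}_{\widetilde{\mathfrak a}}(v)$ for all $0\ne v\in B$, and there exists $(r,s)\in\mathbb Z_+^2$ such that $\mathcal L^{(r,s)}B=0$. (2) If $\mathrm{ord}_{\widetilde{\mathfrak a}}(B)=0$, then $B$ is a simple $\mathfrak a$-module. (3) If $r=\mathrm{ord}_{\widetilde{\mathfrak a}}(B)>0$, then $I_{r-1}$ acts bijectively on $B$.
   Context: In the Lie algebra with basis $\{d_n=t^{n+1}\frac{d}{dt},I_n=t^n\}$ (brackets $[d_n,d_m]=(m-n)d_{m+n}$, $[d_n,I_m]=mI_{m+n}$, $[I_n,I_m]=0$ for the indices used here), let $\mathfrak a=\mathrm{span}\{d_i\mid i\ge0\}$, $\widetilde{\mathfrak a}=\mathrm{span}\{d_i,I_i\mid i\ge0\}$, and $\mathcal L^{(r,s)}=\mathrm{span}\{I_{r+i},d_{s+i}\mid i\ge0\}$. $\mathcal O_{\widetilde{\mathfrak a}}$ is the category of $\widetilde{\mathfrak a}$-modules $V$ such that for each $v\in V$ there is $n>0$ with $d_iv=I_iv=0$ for all $i\ge n$. For $0\ne v\in B$, $\mathrm{ord}_{\widetilde{\mathfrak a}}(v)$ is the minimal $r\in\mathbb Z_+$ with $I_{r+i}v=0$ for all $i\ge0$, and $\mathrm{ord}_{\widetilde{\mathfrak a}}(B)$ is the maximum of the orders of its nonzero elements ($\infty$ if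 it does not exist). *)

From HB Require Import structures.
From mathcomp Require Import all_boot all_order all_algebra.
Set Implicit Arguments. Unset Strict Implicit. Unset Printing Implicit Defensive.
Import Order.TTheory GRing.Theory Num.Theory.
Local Open Scope ring_scope.

Section Defs.
Variables (K : numClosedFieldType) (V : lmodType K).
Variables (d I : nat -> {linear V -> V}).

(* V is a module over  ã = span{d_i, I_i | i >= 0} via  d_i |-> d i, I_i |-> I i *)
Definition is_at_module : Prop :=
  [/\ forall (n m : nat) (v : V),
        d n (d m v) - d m (d n v) = ((m%:Z - n%:Z)%R)%:~R *: d (m + n)%N v,
      forall (n m : nat) (v : V),
        d n (I m v) - I m (d n v) = m%:R *: I (m + n)%N v
    & forall (n m : nat) (v : V), I n (I m v) = I m (I n v)].

Definition in_O_at : Prop :=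
  forall v : V, exists2 n : nat, (0 < n)%N &
    forall i : nat, (n <= i)%N -> d i v = 0 /\ I i v = 0.

Definition subspace (W : V -> Prop) : Prop :=
  [/\ W 0, (forall x y, W x -> W y -> W (x + y)) & (forall (a : K) x, W x -> W (a *: x))].

Definition a_submodule (W : V -> Prop) : Prop :=
  subspace W /\ forall i x, W x -> W (d i x).

Definition at_submodule (W : V -> Prop) : Prop :=
  a_submodule W /\ forall i x, W x -> W (I i x).

Definition simple_wrt (P : (V -> Prop) -> Prop) : Prop :=
  (exists v : V, v != 0) /\
  forall W, P W -> (forall x, W x -> x = 0) \/ (forall x, W x).

Definition at_simple : Prop := simple_wrt at_submodule.
Definition a_simple : Prop := simple_wrt a_submodule.

Definition kills_from (v : V) (r : nat) : Prop := forall i : nat, I (r + i)%N v = 0.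
Definition is_ord (v : V) (r : nat) : Prop :=
  kills_from v r /\ forall r', kills_from v r' -> (r <= r')%N.

Definition is_ord_module (r : nat) : Prop :=
  (exists2 v : V, v != 0 & is_ord v r) /\
  forall (v : V) (r' : nat), v != 0 -> is_ord v r' -> (r' <= r)%N.

Definition L_kills (r s : nat) : Prop :=
  forall (i : nat) (v : V), I (r + i)%N v = 0 /\ d (s + i)%N v = 0.

End Defs.

From HB Require Import structures.
From mathcomp Require Import all_boot all_order all_algebra.
Import Order.TTheory GRing.Theory Num.Theory.
Set Implicit Arguments. Unset Strict Implicit. Unset Printing Implicit Defensive.
Local Open Scope ring_scope.

(* Since B lies in O, a nonzero v is killed by all I_i and d_i with i >= n.
   The vectors killed by all I_{r+i} form an ã-submodule, because [d_n, I_m]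
   and [I_n, I_m] only raise indices; by simplicity it is 0 or B, so all nonzero
   vectors have the same order r.  Likewise, once B is killed by all I_{n+i},
   the vectors killed by all d_{n+i} form a submodule containing v, giving
   L^{(n,n)} B = 0.  If r = s + 1 > 0, then ker I_s and im I_s are submodules
   (the commutator terms involve I_{s+k} = 0 with k > 0, except for d_0);
   ker I_s = B would lower the order, so I_s is injective, hence im I_s = B. *)

Lemma inj_surj_bij (T : choiceType) (U : eqType) (f : T -> U) :
  injective f -> (forall y, exists x, f x = y) -> bijective f.
Proof.
move=> f_inj f_surj.
have f_surjb y : exists x, f x == y by have [x <-] := f_surj y; exists x.
exists (fun y => xchoose (f_surjb y)) => [x|y]; last exact/eqP/(xchooseP (f_surjb y)).
by apply: f_inj; apply/eqP/(xchooseP (f_surjb (f x))).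
Qed.

Section Orders.
Variables (K : numClosedFieldType) (V : lmodType K) (I : nat -> {linear V -> V}).

Lemma kills_from_pred v n : I n v = 0 -> kills_from I v n.+1 -> kills_from I v n.
Proof. by move=> Inv kv [|i]; rewrite ?addn0 // addnS -addSn kv. Qed.

Lemma is_ord_exists v n : kills_from I v n -> exists r, is_ord I v r.
Proof.
elim: n => [|n IHn] kv; first by exists 0%N.
have [Inv0|Inv_neq0] := eqVneq (I n v) 0; first exact/IHn/kills_from_pred.
exists n.+1; split=> // r' kv'; rewrite ltnNge; apply/negP => le_r'n.
by move: Inv_neq0; rewrite -(subnKC le_r'n) kv' eqxx.
Qed.

End Orders.

Section SimpleModule.
Variables (K : numClosedFieldType) (V : lmodType K) (d I : nat -> {linear V -> V}).
Hypotheses (Hmod : is_at_module d I) (Hsimple : at_simple d I).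

Lemma IdE n m x : I m (d n x) = d n (I m x) - m%:R *: I (m + n)%N x.
Proof. by case: Hmod => _ dI _; rewrite -(dI n m x) opprB addrC subrK. Qed.

Lemma dIE n m x : d n (I m x) = I m (d n x) + m%:R *: I (m + n)%N x.
Proof. by case: Hmod => _ dI _; rewrite -(dI n m x) addrC subrK. Qed.

Lemma ddE n m x :
  d n (d m x) = d m (d n x) + ((m%:Z - n%:Z)%R)%:~R *: d (m + n)%N x.
Proof. by case: Hmod => dd _ _; rewrite -(dd n m x) addrC subrK. Qed.

Lemma IIE n m x : I n (I m x) = I m (I n x).
Proof. by case: Hmod => _ _ II. Qed.

Lemma subspace_kernels (J : Type) (f : J -> {linear V -> V}) :
  subspace (fun u => forall j, f j u = 0).
Proof.
split=> [j|x y fx fy j|a x fx j]; first exact: linear0.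
  by rewrite linearD fx fy addr0.
by rewrite linearZZ fx scaler0.
Qed.

Lemma subspace_image (f : {linear V -> V}) : subspace (fun u => exists x, u = f x).
Proof.
split=> [|_ _ [x ->] [y ->]|a _ [x ->]]; first by exists 0; rewrite linear0.
  by exists (x + y); rewrite linearD.
by exists (a *: x); rewrite linearZZ.
Qed.

Lemma at_submodule_full (W : V -> Prop) w :
  at_submodule d I W -> W w -> w != 0 -> forall u, W u.
Proof.
move=> W_sub Ww w_neq0; case: Hsimple => _ /(_ W W_sub) [W0|//].
by move: w_neq0; rewrite (W0 w Ww) eqxx.
Qed.

Lemma kills_from_submodule r : at_submodule d I (fun u => kills_from I u r).
Proof.
split; [split; first exact: (subspace_kernels (fun i => I (r + i)%N))|].
  by move=> n x kx i; rewrite IdE kx linear0 -addnA kx scaler0 subr0.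
by move=> j x kx i; rewrite IIE kx linear0.
Qed.

Lemma kills_from_all w r : w != 0 -> kills_from I w r -> forall u, kills_from I u r.
Proof. by move=> w_neq0 kw; apply: at_submodule_full kw w_neq0; apply: kills_from_submodule. Qed.

Lemma is_ord_all v r : v != 0 -> is_ord I v r -> forall w, w != 0 -> is_ord I w r.
Proof.
move=> v_neq0 [kv min_v] w w_neq0; split; first exact: kills_from_all kv _.
by move=> r' kw; apply/min_v/(kills_from_all w_neq0).
Qed.

Lemma is_ord_moduleP v r : v != 0 -> is_ord I v r -> is_ord_module I r.
Proof.
move=> v_neq0 ord_v; split; first by exists v.
by move=> w r' w_neq0 [_ min_w]; apply/min_w/(kills_from_all v_neq0); case: ord_v.
Qed.

Lemma is_ord_module_kills r : is_ord_module I r -> forall u, kills_from I u r.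
Proof. by case=> -[v v_neq0 [kv _]] _; apply: kills_from_all kv. Qed.

Lemma d_vanish_submodule s :
  (forall u, kills_from I u s) -> at_submodule d I (fun u => forall i, d (s + i)%N u = 0).
Proof.
move=> kV; split; [split; first exact: (subspace_kernels (fun i => d (s + i)%N))|].
  move=> n x dx i; rewrite ddE dx linear0 add0r.
  by rewrite [(n + _)%N]addnC -addnA dx scaler0.
move=> j x dx i; rewrite dIE dx linear0 add0r.
by rewrite [(j + _)%N]addnC -addnA kV scaler0.
Qed.

Lemma a_submodule_at (W : V -> Prop) :
  (forall i u, I i u = 0) -> a_submodule d W -> at_submodule d I W.
Proof. by move=> I0 W_sub; split=> // i x _; case: W_sub => -[W0 _ _] _; rewrite I0. Qed.

Section PositiveOrder.
Variable s : nat.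
Hypothesis kV : forall u, kills_from I u s.+1.

Lemma I_above n x : I (s + n.+1)%N x = 0.
Proof. by rewrite addnS -addSn kV. Qed.

Lemma image_I_submodule : at_submodule d I (fun u => exists x, u = I s x).
Proof.
split; [split; first exact: subspace_image|].
  move=> [|n] _ [x ->]; rewrite dIE.
    by exists (d 0 x + s%:R *: x); rewrite addn0 linearD linearZZ.
  by exists (d n.+1 x); rewrite I_above scaler0 addr0.
by move=> j _ [x ->]; exists (I j x); rewrite IIE.
Qed.

Lemma I_injective : ~ (forall u, kills_from I u s) -> injective (I s).
Proof.
move=> not_kV x y Ixy; apply/eqP; rewrite -subr_eq0; apply/contraT => xy_neq0.
case: not_kV; apply: (kills_from_all xy_neq0); apply: kills_from_pred => //.
by rewrite linearB Ixy subrr.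
Qed.

Lemma I_surjective : injective (I s) -> forall y, exists x, I s x = y.
Proof.
move=> I_inj y; have [[v v_neq0] _] := Hsimple.
have Iv_neq0 : I s v != 0 by apply: contra_neq v_neq0 => Iv0; apply: I_inj; rewrite Iv0 linear0.
by have [x ->] := at_submodule_full image_I_submodule (ex_intro _ v erefl) Iv_neq0 y; exists x.
Qed.

End PositiveOrder.
End SimpleModule.

Theorem lemma28 (K : numClosedFieldType) (V : lmodType K)
  (d I : nat -> {linear V -> V})
  (Hmod : is_at_module d I) (HO : in_O_at d I) (Hsimple : at_simple d I) :
  [/\ (exists r : nat, is_ord_module I r /\
         forall v : V, v != 0 -> is_ord I v r)
      /\ (exists r s : nat, L_kills d I r s),
      is_ord_module I 0 -> a_simple d
    & forall r : nat, (0 < r)%N -> is_ord_module I r -> bijective (I r.-1)].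
Proof.
have [[v v_neq0] _] := Hsimple.
have [n _ v_O] := HO v.
have kv : kills_from I v n by move=> i; case: (v_O _ (leq_addr i n)).
have [r ord_v] := is_ord_exists kv.
split.
- split; first by exists r; split;
    [apply: (is_ord_moduleP Hmod Hsimple v_neq0) | apply: (is_ord_all Hmod Hsimple v_neq0)].
  have kV := kills_from_all Hmod Hsimple v_neq0 kv.
  have dV := at_submodule_full Hsimple (d_vanish_submodule Hmod kV)
    (fun i => proj1 (v_O _ (leq_addr i n))) v_neq0.
  by exists n, n => i u; split; [apply: kV | apply: dV].
- move=> /(is_ord_module_kills Hmod Hsimple) k0.
  split=> [|W /(a_submodule_at (fun i u => k0 u i))]; first by exists v.
  by case: Hsimple => _; apply.
- case=> // s _ ord_s; have kV := is_ord_module_kills Hmod Hsimple ord_s.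
  have I_inj : injective (I s).
    apply: (I_injective Hmod Hsimple kV) => kVs.
    by case: ord_s => -[w _ [_ min_w]] _; have := min_w s (kVs w); rewrite ltnn.
  exact: inj_surj_bij I_inj (I_surjective Hmod Hsimple kV I_inj).
Qed.
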